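(* Let $\rho\in(0,1)$ and $0<\alpha\le\min\{1/2,2\rho,2(1-\rho)\}$. Let $\Theta=[-\alpha/20,\alpha/20]$ and for $\theta\in\Theta$ set $l_1(\theta)=\frac{4\rho-\alpha}{16-8\alpha}+\theta$, $l_2(\theta)=l_1(\theta)+\rho/2$, $r_2(\theta)=l_2(\theta)+1/4$, $r_1(\theta)=r_2(\theta)+(1-\rho)/2$, $w_1=2\pi/\rho$, $w_2=2\pi/(1-\rho)$. Define the density $f(x|\theta)=0$ for $x\notin[0,1]$ and, for $x\in[0,1]$: $f(x|\theta)=2-\alpha$ on $[0,l_1(\theta)]\cup[r_1(\theta),1]$; $f(x|\theta)=\alpha$ on $(l_2(\theta),r_2(\theta)]$; $f(x|\theta)=\alpha+(1-\alpha)(\cos(w_1(x-l_1(\theta)))+1)$ on $[l_1(\theta),l_2(\theta)]$; $f(x|\theta)=\alpha+(1-\alpha)(\cos(w_2(r_1(\theta)-x))+1)$ on $[r_2(\theta),r_1(\theta)]$. For $t\ge1$ let $X_1,\dots,X_t$ be i.i.d. with density $f(\cdot|\theta)$ and joint density $f(X_1,\dots,X_t|\theta)$. Then for every $t\ge1$ and $\theta\in\Theta$, $$I_t(\theta):=\mathbb{E}_\theta\left[\left(\frac{\partial\log f(X_1,\dots,X_t|\theta)}{\partial\theta}\right)^2\right]\le\frac{4\pi^2 t}{\rho(1-\rho)}.$$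
   Context: $I_t(\theta)$ is the Fisher information of $t$ i.i.d. samples about the parameter $\theta$; $\mathbb{E}_\theta$ is the expectation over $X_1,\dots,X_t$. *)

From HB Require Import structures.
From mathcomp Require Import all_boot all_order all_algebra.
From mathcomp Require Import all_classical all_reals all_analysis.
Set Implicit Arguments. Unset Strict Implicit. Unset Printing Implicit Defensive.
Import Order.TTheory GRing.Theory Num.Theory.
Import numFieldNormedType.Exports.
Local Open Scope classical_set_scope.
Local Open Scope ring_scope.

Section Defs.
Variable R : realType.

Definition l1 (rho alpha theta : R) : R :=
  (4 * rho - alpha) / (16 - 8 * alpha) + theta.
Definition l2 (rho alpha theta : R) : R := l1 rho alpha theta + rho / 2.
Definition r2 (rho alpha theta : R) : R := l2 rho alpha theta + 1 / 4.
Definition r1 (rho alpha theta : R) : R := r2 rho alpha theta + (1 - rho) / 2.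
Definition w1 (rho : R) : R := 2 * pi / rho.
Definition w2 (rho : R) : R := 2 * pi / (1 - rho).

Definition dens (rho alpha theta x : R) : R :=
  if (0 <= x) && (x <= 1) then
    if x <= l1 rho alpha theta then 2 - alpha
    else if x <= l2 rho alpha theta then
      alpha + (1 - alpha) * (cos (w1 rho * (x - l1 rho alpha theta)) + 1)
    else if x <= r2 rho alpha theta then alpha
    else if x <= r1 rho alpha theta then
      alpha + (1 - alpha) * (cos (w2 rho * (r1 rho alpha theta - x)) + 1)
    else 2 - alpha
  else 0.

Definition joint_dens (rho alpha : R) (t : nat) (theta : R) (x : nat -> R) : R :=
  \prod_(i < t) dens rho alpha theta (x i).

Definition score (rho alpha : R) (t : nat) (x : nat -> R) (theta : R) : R :=
  derive1 (fun th : R => ln (joint_dens rho alpha t th x)) theta.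

Definition upd (x : nat -> R) (k : nat) (y : R) : nat -> R :=
  fun j => if j == k then y else x j.

Fixpoint iter_int (n : nat) (g : (nat -> R) -> \bar R) (x : nat -> R) : \bar R :=
  match n with
  | 0 => g x
  | n'.+1 => (\int[@lebesgue_measure R]_(y in setT) iter_int n' g (upd x n' y))%E
  end.

Definition fisher_info (rho alpha : R) (t : nat) (theta : R) : \bar R :=
  iter_int t (fun x => ((score rho alpha t x theta) ^+ 2
                         * joint_dens rho alpha t theta x)%:E) (fun _ => 0).
End Defs.

From HB Require Import structures.
From mathcomp Require Import all_boot all_order all_algebra.
From mathcomp Require Import all_classical all_reals all_analysis.
From mathcomp Require Import ring lra.
From mathcomp Require Import measurable_realfun.
Set Implicit Arguments. Unset Strict Implicit. Unset Printing Implicit Defensive.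
Import Order.TTheory GRing.Theory Num.Theory.
Import numFieldNormedType.Exports.
Local Open Scope classical_set_scope.
Local Open Scope ring_scope.

(* On [0, 1], f(x | theta) = h(x - theta) for a single positive C^1 profile h
   (two half periods of cosine joined by constant levels), and for theta in
   Theta the non-constant part of h(. - theta) stays inside [0, 1].  Hence the
   score of t samples is the sum of the per-sample scores -h'/h(X_i - theta),
   which are centred because the integral of h' vanishes, so I_t = t * I_1
   with I_1 = int h'^2/h.  On a cosine piece of frequency w,
   h'^2 = (1-alpha)^2 w^2 sin^2 <= 2 (1-alpha) w^2 h, since
   sin^2 <= 2 (1 + cos) and h >= (1-alpha)(1 + cos); integrating over the
   pieces, of lengths rho/2 and (1-rho)/2, gives
   I_1 <= (1-alpha) 4 pi^2 / (rho (1-rho)). *)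

Section real_calculus.
Variable R : realType.
Notation mu := (@lebesgue_measure R).

Lemma is_derive1_comp (f g : R -> R) (x df dg : R) :
  is_derive x 1 f df -> is_derive (f x) 1 g dg -> is_derive x 1 (g \o f) (dg * df).
Proof.
move=> hf hg; have [f1 _] := hf; have [g1 _] := hg.
apply: DeriveDef.
  by apply/derivable1_diffP; apply: differentiable_comp; exact/derivable1_diffP.
rewrite -derive1E derive1_comp // !derive1E.
by rewrite (@derive_val _ _ _ _ _ _ _ hf) (@derive_val _ _ _ _ _ _ _ hg).
Qed.

Lemma is_derive_affine (c k a x : R) :
  is_derive x 1 (fun v : R => c + k * (v - a)) k.
Proof.
have -> : (fun v : R => c + k * (v - a)) = cst c + cst k * (id - cst a) by [].
by apply: is_derive_eq; rewrite /= !scaler0 addr0 subr0 add0r -[_ *: _]/(k * 1) mulr1.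
Qed.

Lemma is_derive_cos_affine (k a x : R) :
  is_derive x 1 (fun v : R => cos (k * (v - a))) (- sin (k * (x - a)) * k).
Proof.
have := is_derive1_comp (is_derive_affine 0 k a x) (is_derive_cos _).
by rewrite /comp add0r; under [X in is_derive _ _ X]eq_fun do rewrite add0r.
Qed.

Lemma is_derive_sin_affine (k a x : R) :
  is_derive x 1 (fun v : R => sin (k * (v - a))) (cos (k * (x - a)) * k).
Proof.
have := is_derive1_comp (is_derive_affine 0 k a x) (is_derive_sin _).
by rewrite /comp add0r; under [X in is_derive _ _ X]eq_fun do rewrite add0r.
Qed.

Lemma is_derive_glue (f g1 g2 : R -> R) (c d e : R) : 0 < e ->
  is_derive c 1 g1 d -> is_derive c 1 g2 d ->
  (forall u, c - e < u <= c -> f u = g1 u) ->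
  (forall u, c <= u < c + e -> f u = g2 u) ->
  is_derive c 1 f d.
Proof.
move=> e0 d1 d2 h1 h2.
have rate (g : R -> R) : is_derive c 1 g d ->
    (fun h : R => h^-1 *: ((g \o shift c) (h *: (1:R)) - g c)) @ 0^' --> d.
  by move=> dg; rewrite -(@derive_val _ _ _ _ _ _ _ dg); case: dg.
have fc1 : f c = g1 c by apply: h1; rewrite lexx andbT; lra.
have fc2 : f c = g2 c by apply: h2; rewrite lexx /=; lra.
have rate_f : (fun h : R => h^-1 *: ((f \o shift c) (h *: (1:R)) - f c)) @ 0^' --> d.
  apply: (@cvg_at_right_left_dnbhs R R^o).
  - apply: cvg_trans (cvg_dnbhs_at_right (rate _ d2)).
    apply: near_eq_cvg; near=> h => /=.
    have hp : 0 < h by near: h; exact: nbhs_right_gt.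
    have he : h < e by near: h; apply: nbhs_right_lt.
    by rewrite -[h%:A]/(h * 1) mulr1 fc2 h2 //; apply/andP; split; lra.
  - apply: cvg_trans (cvg_dnbhs_at_left (rate _ d1)).
    apply: near_eq_cvg; near=> h => /=.
    have hn : h < 0 by near: h; exact: nbhs_left_lt.
    have he : - e < h by near: h; apply: nbhs_left_gt; lra.
    by rewrite -[h%:A]/(h * 1) mulr1 fc1 h1 //; apply/andP; split; lra.
by apply: DeriveDef; [apply/cvg_ex; exists d | exact: cvg_lim].
Unshelve. all: by end_near. Qed.

Definition clamp (a b u : R) : R := Num.min (Num.max u a) b.

Lemma clamp_lo a b u : a <= b -> u <= a -> clamp a b u = a.
Proof. by move=> ab ua; rewrite /clamp max_r // min_l. Qed.

Lemma clamp_mid a b u : a <= u <= b -> clamp a b u = u.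
Proof. by case/andP=> au ub; rewrite /clamp max_l // min_l. Qed.

Lemma clamp_hi a b u : a <= b -> b <= u -> clamp a b u = b.
Proof. by move=> ab bu; rewrite /clamp min_r // le_max; apply/orP; left; lra. Qed.

Lemma continuous_clamp a b : continuous (clamp a b).
Proof.
have -> : clamp a b = (id \max cst a) \min cst b by [].
move=> x; apply: (@continuous_min R R^o); last exact: cst_continuous.
by apply: (@continuous_max R R^o); last exact: cst_continuous.
Qed.

Definition affine_ext (g : R -> R) (a b ka kb v : R) : R :=
  g (clamp a b v) + ka * Num.min (v - a) 0 + kb * Num.max (v - b) 0.

Lemma affine_ext_lo g a b ka kb v : a <= b -> v <= a ->
  affine_ext g a b ka kb v = g a + ka * (v - a).
Proof.
by move=> ab va; rewrite /affine_ext clamp_lo // min_l ?max_r ?mulr0 ?addr0 //; lra.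
Qed.

Lemma affine_ext_mid g a b ka kb v : a <= v <= b -> affine_ext g a b ka kb v = g v.
Proof.
move=> abv; rewrite /affine_ext clamp_mid // min_r ?max_r ?mulr0 ?addr0 //;
  case/andP: abv => *; lra.
Qed.

Lemma affine_ext_hi g a b ka kb v : a <= b -> b <= v ->
  affine_ext g a b ka kb v = g b + kb * (v - b).
Proof.
by move=> ab bv; rewrite /affine_ext clamp_hi // min_r ?max_l ?mulr0 ?addr0 //; lra.
Qed.

Lemma is_derive_affine_ext (g g' : R -> R) (a b ka kb u : R) : a < b ->
  (forall v : R, is_derive v 1 g (g' v)) -> g' a = ka -> g' b = kb ->
  is_derive u 1 (affine_ext g a b ka kb) (g' (clamp a b u)).
Proof.
move=> ab dg <- <-; have ab' : a <= b by lra.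
have dlo := is_derive_affine (g a) (g' a) a.
have dhi := is_derive_affine (g b) (g' b) b.
have onlo v : v <= a -> affine_ext g a b (g' a) (g' b) v = g a + g' a * (v - a).
  exact: affine_ext_lo.
have onmid v : a <= v <= b -> affine_ext g a b (g' a) (g' b) v = g v.
  exact: affine_ext_mid.
have onhi v : b <= v -> affine_ext g a b (g' a) (g' b) v = g b + g' b * (v - b).
  exact: affine_ext_hi.
case: (ltgtP u a) => [ua|au|->].
- rewrite clamp_lo; try lra.
  by apply: (is_derive_glue (e := a - u) _ (dlo u) (dlo u)) => [|v|v];
    [lra | case/andP=> *; apply: onlo; lra..].
- case: (ltgtP u b) => [ub|bu|->].
  + rewrite clamp_mid; last by apply/andP; lra.
    pose e := Num.min (u - a) (b - u).
    have [ea eb] : e <= u - a /\ e <= b - u by rewrite !ge_min !lexx orbT.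
    apply: (is_derive_glue (e := e) _ (dg u) (dg u)) => [|v|v].
    * by rewrite lt_min; apply/andP; lra.
    * by case/andP=> *; apply: onmid; apply/andP; lra.
    * by case/andP=> *; apply: onmid; apply/andP; lra.
  + rewrite clamp_hi; try lra.
    by apply: (is_derive_glue (e := u - b) _ (dhi u) (dhi u)) => [|v|v];
      [lra | case/andP=> *; apply: onhi; lra..].
  + rewrite clamp_mid; last by apply/andP; lra.
    apply: (is_derive_glue (e := b - a) _ (dg b) (dhi b)) => [|v|v]; first lra.
    * by case/andP=> *; apply: onmid; apply/andP; lra.
    * by case/andP=> *; apply: onhi; lra.
- rewrite clamp_mid; last by apply/andP; lra.
  apply: (is_derive_glue (e := b - a) _ (dlo a) (dg a)) => [|v|v]; first lra.
  + by case/andP=> *; apply: onlo; lra.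
  + by case/andP=> *; apply: onmid; apply/andP; lra.
Qed.

Lemma is_derive_comp_clamp (g g' : R -> R) (a b u : R) : a < b ->
  (forall v : R, is_derive v 1 g (g' v)) -> g' a = 0 -> g' b = 0 ->
  is_derive u 1 (g \o clamp a b) (g' (clamp a b u)).
Proof.
move=> ab dg ga gb.
have := is_derive_affine_ext u ab dg ga gb.
by rewrite /affine_ext; under [X in is_derive _ _ X]eq_fun do rewrite !mul0r !addr0.
Qed.

Lemma integrable_itv_continuous (f : R -> R) (a b : R) :
  continuous f -> mu.-integrable `[a, b] (EFin \o f).
Proof.
move=> cf; apply: continuous_compact_integrable; first exact: segment_compact.
exact: continuous_subspaceT.
Qed.

Lemma integral_itv_is_derive (f F : R -> R) (a b : R) : a < b -> continuous f ->
  (forall x : R, is_derive x 1 F (f x)) ->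
  (\int[mu]_(x in `[a, b]) (f x)%:E = (F b - F a)%:E)%E.
Proof.
move=> ab cf dF.
have cF : continuous F.
  move=> x; apply/differentiable_continuous/derivable1_diffP.
  by case: (dF x).
rewrite EFinB; apply: continuous_FTC2 => //.
- exact: continuous_subspaceT.
- split; first by move=> x _; case: (dF x).
  + exact: cvg_at_right_filter (cF a).
  + exact: cvg_at_left_filter (cF b).
- by move=> x _; rewrite derive1E (@derive_val _ _ _ _ _ _ _ (dF x)).
Qed.

Lemma ln_prod (n : nat) (f : 'I_n -> R) : (forall i, 0 < f i) ->
  ln (\prod_(i < n) f i) = \sum_(i < n) ln (f i).
Proof.
elim: n f => [|n IH] f f_gt0; first by rewrite !big_ord0 ln1.
rewrite !big_ord_recr /= lnM ?IH ?posrE //.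
by apply: prodr_gt0 => i _.
Qed.

Lemma is_derive_shift (F f : R -> R) (c x : R) :
  (forall u : R, is_derive u 1 F (f u)) -> is_derive x 1 (fun v => F (v - c)) (f (x - c)).
Proof.
move=> dF; have := is_derive1_comp (is_derive_affine 0 1 c x) (dF _).
rewrite /comp mulr1 add0r mul1r.
by under [X in is_derive _ _ X]eq_fun do rewrite add0r mul1r.
Qed.

Lemma continuous_shift (f : R -> R) (c : R) :
  continuous f -> continuous (fun v => f (v - c)).
Proof.
move=> cf x; apply: continuous_comp; last exact: cf.
by apply: (@continuousB R R^o) => //; exact: cst_continuous.
Qed.

Lemma is_derive_ln_shift (h h' : R -> R) (z c : R) : (forall u, 0 < h u) ->
  (forall u : R, is_derive u 1 h (h' u)) ->
  is_derive c 1 (fun v => ln (h (z - v))) (- h' (z - c) / h (z - c)).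
Proof.
move=> h_gt0 dh.
have dz : is_derive c 1 (fun v => z - v) (-1).
  have := is_derive_affine z (-1) 0 c.
  by under [X in is_derive _ _ X]eq_fun do rewrite subr0 mulN1r.
have d := is_derive1_comp (is_derive1_comp dz (dh _)) (is_derive1_ln (h_gt0 (z - c))).
rewrite /comp in d; apply: (is_derive_eq d).
by rewrite mulrN1 mulrC.
Qed.

Lemma integrable_patch_itv (g : R -> R) (a b : R) : continuous g ->
  mu.-integrable setT (EFin \o (g \_ `[a, b])).
Proof.
move=> cg; rewrite -restrict_EFin -integrable_mkcond //.
exact: integrable_itv_continuous.
Qed.

Lemma integral_indic_itv (k a b c d : R) : 0 <= k -> c <= a -> a < b -> b <= d ->
  (\int[mu]_(x in `[c, d]) (k * \1_(`[a, b]) x)%:E = (k * (b - a))%:E)%E.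
Proof.
move=> k0 ca ab bd.
rewrite (@integralZl_indic _ _ _ mu _ (measurable_itv _) (fun _ => `[a, b]%classic)) //;
  last first.
  by move=> k_lt0; exfalso; lra.
rewrite integral_indic //= setIidl; last first.
  by move=> x /=; rewrite !in_itv /= => /andP[? ?]; apply/andP; split; lra.
by rewrite lebesgue_measure_itv /= lte_fin ab -EFinB -EFinM.
Qed.

Lemma indic_itv_shift (a b c x : R) :
  \1_(`[a, b]%classic) (x - c) = \1_(`[a + c, b + c]%classic) x :> R.
Proof.
by rewrite !indicE !mem_setE !in_itv /= lerBrDr lerBlDr.
Qed.

End real_calculus.

Section cos_ramp.
Variable R : realType.
Variables a b : R.
Hypothesis ab : a < b.

Definition cos_ramp (u : R) : R := cos (pi / (b - a) * (clamp a b u - a)).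
Definition cos_ramp' (u : R) : R :=
  - sin (pi / (b - a) * (clamp a b u - a)) * (pi / (b - a)).
Definition cos_ramp_prim : R -> R :=
  affine_ext (fun v => (pi / (b - a))^-1 * sin (pi / (b - a) * (v - a))) a b 1 (-1).

Let k := pi / (b - a).

Lemma cos_ramp_slope_gt0 : 0 < k.
Proof. by rewrite divr_gt0 ?pi_gt0 // subr_gt0. Qed.

Lemma cos_ramp_half_period : k * (b - a) = pi.
Proof. by rewrite /k mulfVK // subr_eq0 gt_eqF. Qed.

Lemma is_derive_cos_ramp (u : R) : is_derive u 1 cos_ramp (cos_ramp' u).
Proof.
apply: (is_derive_comp_clamp (g := fun v => cos (k * (v - a)))
  (g' := fun v => - sin (k * (v - a)) * k)) => //.
- exact: is_derive_cos_affine.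
- by rewrite subrr mulr0 sin0 oppr0 mul0r.
- by rewrite cos_ramp_half_period sinpi oppr0 mul0r.
Qed.

Lemma is_derive_cos_ramp_prim (u : R) : is_derive u 1 cos_ramp_prim (cos_ramp u).
Proof.
apply: (is_derive_affine_ext (g' := fun v => cos (k * (v - a)))) => //.
- move=> v; have := is_derive_sin_affine k a v.
  move=> /(is_deriveZ k^-1) /is_derive_eq; apply.
  by rewrite -[_ *: _]/(k^-1 * _) mulrCA mulVf ?mulr1 // gt_eqF // cos_ramp_slope_gt0.
- by rewrite subrr mulr0 cos0.
- by rewrite cos_ramp_half_period cospi.
Qed.

Lemma continuous_cos_ramp' : continuous cos_ramp'.
Proof.
move=> u; rewrite /cos_ramp' -/k.
apply: (@continuousM R R^o (fun v => - sin (k * (clamp a b v - a))) (cst k));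
  last exact: cst_continuous.
apply: (@continuousN R R^o); apply: continuous_comp; last exact: continuous_sin.
apply: (@continuousM R R^o (cst k)); first exact: cst_continuous.
apply: (@continuousB R R^o); [exact: continuous_clamp | exact: cst_continuous].
Qed.

Lemma cos_ramp_lo u : u <= a -> cos_ramp u = 1.
Proof. by move=> ua; rewrite /cos_ramp clamp_lo ?subrr ?mulr0 ?cos0 // ltW. Qed.

Lemma cos_ramp_hi u : b <= u -> cos_ramp u = -1.
Proof. by move=> bu; rewrite /cos_ramp clamp_hi ?cos_ramp_half_period ?cospi // ltW. Qed.

Lemma cos_ramp'_lo u : u <= a -> cos_ramp' u = 0.
Proof.
by move=> ua; rewrite /cos_ramp' clamp_lo ?subrr ?mulr0 ?sin0 ?oppr0 ?mul0r // ltW.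
Qed.

Lemma cos_ramp'_hi u : b <= u -> cos_ramp' u = 0.
Proof.
by move=> bu; rewrite /cos_ramp' clamp_hi ?cos_ramp_half_period ?sinpi ?oppr0 ?mul0r // ltW.
Qed.

Lemma cos_ramp_prim_lo u : u <= a -> cos_ramp_prim u = u - a.
Proof.
by move=> ua; rewrite /cos_ramp_prim affine_ext_lo ?subrr ?mulr0 ?sin0 ?mulr0 ?add0r ?mul1r
  // ltW.
Qed.

Lemma cos_ramp_prim_hi u : b <= u -> cos_ramp_prim u = b - u.
Proof.
move=> bu; rewrite /cos_ramp_prim affine_ext_hi ?(ltW ab) //.
by rewrite cos_ramp_half_period sinpi mulr0 add0r mulN1r opprB.
Qed.

Lemma cos_ramp_bounds u : -1 <= cos_ramp u <= 1.
Proof. by rewrite cos_geN1 cos_le1. Qed.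

Lemma sqr_cos_ramp' u : cos_ramp' u ^+ 2 = k ^+ 2 * (1 - cos_ramp u ^+ 2).
Proof.
rewrite /cos_ramp' /cos_ramp -/k -(cos2Dsin2 (k * (clamp a b u - a))); ring.
Qed.

Lemma sqr_cos_ramp'_le u :
  cos_ramp' u ^+ 2 <= k ^+ 2 * \1_(`[a, b]%classic) u * (1 - cos_ramp u ^+ 2).
Proof.
rewrite indicE; case: (boolP (u \in _)) => [_ | /negP uab].
  by rewrite mulr1 sqr_cos_ramp'.
have [ua | au] := lerP u a; first by rewrite cos_ramp'_lo // expr0n mulr0 mul0r.
have bu : b <= u.
  rewrite leNgt; apply/negP => ub; apply: uab.
  by apply/mem_set; rewrite /= in_itv /= !ltW.
by rewrite cos_ramp'_hi // expr0n mulr0 mul0r.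
Qed.
End cos_ramp.

Lemma sqr_slope_le (R : realFieldType) (A K c d h : R) :
  0 <= A -> 0 <= K -> -1 <= c <= 1 -> d ^+ 2 <= K * (1 - c ^+ 2) ->
  A * (1 + c) <= h -> A ^+ 2 * d ^+ 2 <= 2 * A * h * K.
Proof.
move=> A0 K0 /andP[c1 c2] hd hh.
have h1 : (1 - c) * (A * (1 + c)) <= 2 * h.
  by apply: ler_pM; rewrite ?mulr_ge0 //; lra.
have AK : 0 <= A * K by apply: mulr_ge0.
apply: le_trans (_ : A ^+ 2 * (K * (1 - c ^+ 2)) <= _).
  by rewrite ler_wpM2l ?sqr_ge0.
have -> : A ^+ 2 * (K * (1 - c ^+ 2)) = A * K * ((1 - c) * (A * (1 + c))) by ring.
have -> : 2 * A * h * K = A * K * (2 * h) by ring.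
by rewrite ler_wpM2l.
Qed.

Section profile.
Variables (R : realType) (al a1 b1 a2 b2 : R).
Hypotheses (al_gt0 : 0 < al) (al_le1 : al <= 1).
Hypotheses (a1b1 : a1 < b1) (b1a2 : b1 <= a2) (a2b2 : a2 < b2).

Definition profile (u : R) : R :=
  al + (1 - al) * (2 + cos_ramp a1 b1 u - cos_ramp a2 b2 u).
Definition profile' (u : R) : R :=
  (1 - al) * (cos_ramp' a1 b1 u - cos_ramp' a2 b2 u).
Definition profile_prim (u : R) : R :=
  al * u + (1 - al) * (2 * u + cos_ramp_prim a1 b1 u - cos_ramp_prim a2 b2 u).

Lemma is_derive_profile (u : R) : is_derive u 1 profile (profile' u).
Proof.
have d1 := is_derive_cos_ramp a1b1 u; have d2 := is_derive_cos_ramp a2b2 u.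
rewrite /profile /profile'; apply: is_derive_eq.
by rewrite /= -[_ *: _]/(_ * _); ring.
Qed.

Lemma is_derive_profile_prim (u : R) : is_derive u 1 profile_prim (profile u).
Proof.
have d1 := is_derive_cos_ramp_prim a1b1 u; have d2 := is_derive_cos_ramp_prim a2b2 u.
rewrite /profile_prim /profile; apply: is_derive_eq.
rewrite /= -![_ *: _]/(_ * _); ring.
Qed.

Lemma continuous_profile : continuous profile.
Proof.
move=> u; apply/differentiable_continuous/derivable1_diffP.
by case: (is_derive_profile u).
Qed.

Lemma continuous_profile' : continuous profile'.
Proof.
move=> u; rewrite /profile'.
apply: (@continuousM R R^o (cst (1 - al)) (cos_ramp' a1 b1 - cos_ramp' a2 b2));
  first exact: cst_continuous.
by apply: (@continuousB R R^o); exact: continuous_cos_ramp'.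
Qed.

Lemma profile_ge u : al <= profile u.
Proof.
have /andP[c1l c1u] := cos_ramp_bounds a1 b1 u.
have /andP[c2l c2u] := cos_ramp_bounds a2 b2 u.
have c12 : 0 <= 2 + cos_ramp a1 b1 u - cos_ramp a2 b2 u by lra.
by rewrite /profile lerDl mulr_ge0 // subr_ge0.
Qed.

Lemma profile_gt0 u : 0 < profile u.
Proof. exact: lt_le_trans (profile_ge u). Qed.

Lemma profile_lo u : u <= a1 -> profile u = 2 - al.
Proof.
move=> ua; rewrite /profile (cos_ramp_lo a1b1) ?(cos_ramp_lo a2b2) //; first ring.
exact: le_trans (ltW (lt_le_trans a1b1 b1a2)).
Qed.

Lemma profile_hi u : b2 <= u -> profile u = 2 - al.
Proof.
move=> bu; rewrite /profile (cos_ramp_hi a1b1) ?(cos_ramp_hi a2b2) //; first ring.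
exact: le_trans (ltW (le_lt_trans b1a2 a2b2)) bu.
Qed.

Lemma profile_prim_increment c d : c <= a1 -> b2 <= d ->
  profile_prim d - profile_prim c = (2 - al) * (d - c) + (1 - al) * (a1 + b1 - a2 - b2).
Proof.
move=> ca bd.
have ca2 : c <= a2 by have := a1b1; have := b1a2; lra.
have b1d : b1 <= d by have := b1a2; have := a2b2; lra.
rewrite /profile_prim (cos_ramp_prim_lo a1b1 ca) (cos_ramp_prim_lo a2b2 ca2).
rewrite (cos_ramp_prim_hi a1b1 b1d) (cos_ramp_prim_hi a2b2 bd); ring.
Qed.

Lemma sqr_profile'_le u : profile' u ^+ 2 <= 2 * (1 - al) * profile u *
  ((pi / (b1 - a1)) ^+ 2 * \1_(`[a1, b1]%classic) u +
   (pi / (b2 - a2)) ^+ 2 * \1_(`[a2, b2]%classic) u).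
Proof.
have /andP[c1l c1u] := cos_ramp_bounds a1 b1 u.
have /andP[c2l c2u] := cos_ramp_bounds a2 b2 u.
have al1 : 0 <= 1 - al by rewrite subr_ge0.
have disjoint : cos_ramp' a1 b1 u * cos_ramp' a2 b2 u = 0.
  case: (lerP u b1) => [ub | bu].
    by rewrite (cos_ramp'_lo a2b2) ?mulr0 // (le_trans ub).
  by rewrite (cos_ramp'_hi a1b1) ?mul0r // ltW.
have -> : profile' u ^+ 2 = (1 - al) ^+ 2 * cos_ramp' a1 b1 u ^+ 2 +
    (1 - al) ^+ 2 * cos_ramp' a2 b2 u ^+ 2.
  by rewrite /profile' exprMn -mulrDr (sqrrB (cos_ramp' a1 b1 u)) disjoint mul0rn subr0.
have K_ge0 (k : R) A : 0 <= k ^+ 2 * \1_A u by rewrite mulr_ge0 ?sqr_ge0 ?indicE.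
rewrite mulrDr; apply: lerD.
- apply: (sqr_slope_le (c := cos_ramp a1 b1 u)) => //.
  + by rewrite c1l c1u.
  + exact: sqr_cos_ramp'_le.
  + have : 0 <= (1 - al) * (1 - cos_ramp a2 b2 u) by rewrite mulr_ge0 // subr_ge0.
    by rewrite /profile; have := al_gt0; lra.
- apply: (sqr_slope_le (c := - cos_ramp a2 b2 u)) => //.
  + by rewrite lerNl opprK c2u /= lerNl c2l.
  + by rewrite sqrrN; exact: sqr_cos_ramp'_le.
  + have : 0 <= (1 - al) * (1 + cos_ramp a1 b1 u) by rewrite mulr_ge0 //; lra.
    by rewrite /profile; have := al_gt0; lra.
Qed.
End profile.

Section iid_sum_of_squares.
Variable R : realType.
Notation mu := (@lebesgue_measure R).
Variables (f s : R -> R) (J : R).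
Hypothesis f_int : mu.-integrable setT (EFin \o f).
Hypothesis sf_int : mu.-integrable setT (EFin \o (fun y => s y * f y)).
Hypothesis s2f_int : mu.-integrable setT (EFin \o (fun y => s y ^+ 2 * f y)).
Hypothesis f_mass : \int[mu]_y f y = 1.
Hypothesis sf_mean : \int[mu]_y (s y * f y) = 0.
Hypothesis s2f_mean : \int[mu]_y (s y ^+ 2 * f y) = J.

Let integrable_scale (r : R) (h : R -> R) : mu.-integrable setT (EFin \o h) ->
  mu.-integrable setT (EFin \o (fun y => r * h y)).
Proof.
move=> /(integrableZl measurableT r); apply: eq_integrable measurableT _ _ _ => y _.
by rewrite /= EFinM.
Qed.

Let integrable_add (h1 h2 : R -> R) : mu.-integrable setT (EFin \o h1) ->
  mu.-integrable setT (EFin \o h2) ->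
  mu.-integrable setT (EFin \o (fun y => h1 y + h2 y)).
Proof.
move=> /(integrableD measurableT) /[apply].
by apply: eq_integrable measurableT _ _ _ => y _; rewrite /= EFinD.
Qed.

Lemma integral_sqr_shift (A k c : R) :
  (\int[mu]_y ((((A + s y) ^+ 2 + k) * (c * f y))%:E) = ((A ^+ 2 + k + J) * c)%:E)%E.
Proof.
pose g y := (A ^+ 2 + k) * c * f y + (2 * A * c * (s y * f y) + c * (s y ^+ 2 * f y)).
have g_int : mu.-integrable setT (EFin \o g).
  by do ?[apply: integrable_add | apply: integrable_scale].
rewrite (@eq_integral _ _ _ mu setT (fun y => (g y)%:E)); last first.
  by move=> y _; rewrite /g; congr EFin; ring.
rewrite -[LHS]fineK ?integrable_fin_num //; congr EFin.
rewrite [fine _]RintegralD ?RintegralD ?RintegralZl //;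
  do ?[apply: integrable_add | apply: integrable_scale] => //.
by rewrite f_mass sf_mean s2f_mean; ring.
Qed.

Lemma iter_int_sqr_sum_prod (n : nat) (G : (nat -> R) -> \bar R) (x : nat -> R)
    (A c : R) :
  (forall z, (forall j, (n <= j)%N -> z j = x j) ->
     G z = ((A + \sum_(i < n) s (z i)) ^+ 2 * (c * \prod_(i < n) f (z i)))%:E) ->
  iter_int n G x = ((A ^+ 2 + n%:R * J) * c)%:E.
Proof.
elim: n G x A c => [|n IH] G x A c hG /=.
  by rewrite hG // !big_ord0 mulr1 addr0 mul0r addr0.
under eq_integral => y _.
  rewrite (IH G (upd x n y) (A + s y) (c * f y)); last first.
    move=> z hz; have zn : z n = y by rewrite hz // /upd eqxx.
    rewrite hG => [|j hj]; last by rewrite hz ?(ltnW hj) // /upd gtn_eqF.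
    by rewrite !big_ord_recr /= zn; congr EFin; ring.
  over.
by rewrite integral_sqr_shift -natr1; congr EFin; ring.
Qed.
End iid_sum_of_squares.

Section cosine_density.
Variables (R : realType) (rho al : R).
Hypotheses (rho_gt0 : 0 < rho) (rho_lt1 : rho < 1) (al_gt0 : 0 < al) (al_le1 : al <= 1).
Notation mu := (@lebesgue_measure R).

Let a1 := l1 rho al 0.
Let b1 := l2 rho al 0.
Let a2 := r2 rho al 0.
Let b2 := r1 rho al 0.
Let h := profile al a1 b1 a2 b2.
Let h' := profile' al a1 b1 a2 b2.

Let a1b1 : a1 < b1. Proof. by rewrite /b1 /l2 -/a1 ltrDl divr_gt0. Qed.
Let b1a2 : b1 <= a2. Proof. by rewrite /a2 /r2 -/b1 lerDl. Qed.
Let a2b2 : a2 < b2. Proof. by rewrite /b2 /r1 -/a2 ltrDl divr_gt0 // subr_gt0. Qed.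

Let b1_a1 : b1 - a1 = rho / 2.
Proof. by rewrite /b1 /l2 -/a1 (addrC a1) addrK. Qed.

Let b2_a2 : b2 - a2 = (1 - rho) / 2.
Proof. by rewrite /b2 /r1 -/a2 (addrC a2) addrK. Qed.

Let w1E : w1 rho = pi / (b1 - a1).
Proof. by rewrite b1_a1 /w1; field; rewrite gt_eqF. Qed.

Let w2E : w2 rho = pi / (b2 - a2).
Proof. by rewrite b2_a2 /w2; field; rewrite gt_eqF // subr_gt0. Qed.

Let h_gt0 u : 0 < h u. Proof. exact: profile_gt0. Qed.
Let h_neq0 u : h u != 0. Proof. by rewrite gt_eqF. Qed.

Let continuous_h_shift th : continuous (fun x => h (x - th)).
Proof. by apply: continuous_shift; exact: continuous_profile. Qed.

Let continuous_h'_shift th : continuous (fun x => h' (x - th)).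
Proof. by apply: continuous_shift; exact: continuous_profile'. Qed.

Lemma dens_profile th x : 0 <= x <= 1 -> dens rho al th x = h (x - th).
Proof.
move=> x01; rewrite /dens x01.
have -> : l1 rho al th = a1 + th by rewrite /a1 /l1; ring.
have -> : l2 rho al th = b1 + th by rewrite /b1 /l2 /l1; ring.
have -> : r2 rho al th = a2 + th by rewrite /a2 /r2 /l2 /l1; ring.
have -> : r1 rho al th = b2 + th by rewrite /b2 /r1 /r2 /l2 /l1; ring.
set u := x - th; have -> : x = u + th by rewrite subrK.
rewrite !lerD2r /h.
have [u_a1 | a1_u] := lerP u a1; first by rewrite profile_lo.
have [u_b1 | b1_u] := lerP u b1.
  rewrite /profile (cos_ramp_lo a2b2 (le_trans u_b1 b1a2)) /cos_ramp.
  rewrite clamp_mid ?u_b1 ?(ltW a1_u) //.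
  have -> : u + th - (a1 + th) = u - a1 by ring.
  by rewrite w1E; ring.
have [u_a2 | a2_u] := lerP u a2.
  by rewrite /profile (cos_ramp_hi a1b1 (ltW b1_u)) (cos_ramp_lo a2b2 u_a2); ring.
have [u_b2 | b2_u] := lerP u b2; last by rewrite profile_hi // ltW.
rewrite /profile (cos_ramp_hi a1b1 (ltW (le_lt_trans b1a2 a2_u))).
rewrite /cos_ramp clamp_mid ?u_b2 ?(ltW a2_u) //.
have -> : w2 rho * (b2 + th - (u + th)) = - (pi / (b2 - a2) * (u - a2)) + pi.
  by rewrite w2E; field; rewrite subr_eq0 gt_eqF.
by rewrite cosDpi cosN; ring.
Qed.

Lemma dens_patch th : dens rho al th = (fun x => h (x - th)) \_ `[0, 1].
Proof.
apply/funext => x; rewrite patchE; case: ifPn => [/set_mem | /negP x01].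
  by rewrite /= in_itv /=; exact: dens_profile.
rewrite /dens ifF //; apply/negP => /andP[x0 x1]; apply: x01.
by apply/mem_set; rewrite /= in_itv /= x0 x1.
Qed.

Definition sample_score (th y : R) : R := - h' (y - th) / h (y - th).

Lemma score_sum t th (z : nat -> R) : (forall i : 'I_t, 0 <= z i <= 1) ->
  score rho al t z th = \sum_(i < t) sample_score th (z i).
Proof.
move=> z01; rewrite /score derive1E.
have -> : (fun v => ln (joint_dens rho al t v z)) =
    \sum_(i < t) (fun v => ln (h (z i - v))).
  apply/funext => v; rewrite fct_sumE /joint_dens -ln_prod //.
  by congr ln; apply: eq_bigr => i _; rewrite dens_profile.
have D (i : 'I_t) := is_derive_ln_shift (z i) th h_gt0 (is_derive_profile al a1b1 a2b2).
exact: (@derive_val _ _ _ _ _ _ _ (is_derive_sum D)).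
Qed.

Lemma score_dens_patch th : (fun y => sample_score th y * dens rho al th y) =
  (fun x => - h' (x - th)) \_ `[0, 1].
Proof.
apply/funext => y; rewrite dens_patch !patchE; case: ifP => _; last by rewrite mulr0.
by rewrite /sample_score mulfVK // h_neq0.
Qed.

Lemma sqr_score_dens_patch th : (fun y => sample_score th y ^+ 2 * dens rho al th y) =
  (fun x => h' (x - th) ^+ 2 / h (x - th)) \_ `[0, 1].
Proof.
apply/funext => y; rewrite dens_patch !patchE; case: ifP => _; last by rewrite mulr0.
by have hy := h_neq0 (y - th); rewrite /sample_score; field.
Qed.

Lemma continuous_sqr_score th : continuous (fun x => h' (x - th) ^+ 2 / h (x - th)).
Proof.
have c' := @continuous_h'_shift th; have c := @continuous_h_shift th.
move=> x; rewrite /GRing.exp /=.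
apply: (@continuousM R R^o (fun x => h' (x - th) * h' (x - th))
  (fun x => (h (x - th))^-1)); first exact: (@continuousM R R^o _ _ x (c' x) (c' x)).
exact: (@continuousV R R^o (fun x => h (x - th)) x (h_neq0 _) (c x)).
Qed.

Let c1 := 2 * (1 - al) * (pi / (b1 - a1)) ^+ 2.
Let c2 := 2 * (1 - al) * (pi / (b2 - a2)) ^+ 2.

Lemma sqr_score_le_indic th x : h' (x - th) ^+ 2 / h (x - th) <=
  c1 * \1_(`[a1 + th, b1 + th]%classic) x + c2 * \1_(`[a2 + th, b2 + th]%classic) x.
Proof.
rewrite ler_pdivrMr // -!indic_itv_shift.
apply: le_trans (sqr_profile'_le al_gt0 al_le1 a1b1 b1a2 a2b2 (x - th)) _.
by rewrite /c1 /c2 /h le_eqVlt; apply/orP; left; apply/eqP; ring.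
Qed.

Definition fisher_info1 th : R := \int[mu]_(x in `[0, 1]) (h' (x - th) ^+ 2 / h (x - th)).

Section support_in_unit_interval.
Variable th : R.
Hypotheses (support_lo : - th <= a1) (support_hi : b2 <= 1 - th).

Lemma integral_dens : \int[mu]_y dens rho al th y = 1.
Proof.
have hF (x : R) :
    is_derive x 1 (fun v => profile_prim al a1 b1 a2 b2 (v - th)) (h (x - th)).
  by apply: is_derive_shift => u; exact: is_derive_profile_prim.
rewrite dens_patch -Rintegral_mkcond /Rintegral.
rewrite (integral_itv_is_derive ltr01 (@continuous_h_shift th) hF) /=.
rewrite profile_prim_increment ?sub0r //.
have -> : a1 + b1 - a2 - b2 = -1 by rewrite /b2 /r1 /a2 /r2 /b1 /l2 -/a1; field.
ring.
Qed.

Lemma integral_score_dens : \int[mu]_y (sample_score th y * dens rho al th y) = 0.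
Proof.
have hc : continuous (fun x => - h' (x - th)).
  by move=> x; exact: continuousN (@continuous_h'_shift th x).
have hF (x : R) : is_derive x 1 (fun v => - h (v - th)) (- h' (x - th)).
  by apply: is_deriveN; apply: is_derive_shift => u; exact: is_derive_profile.
rewrite score_dens_patch -Rintegral_mkcond /Rintegral.
rewrite (integral_itv_is_derive ltr01 hc hF) /=.
rewrite sub0r /h (profile_lo al a1b1 b1a2 a2b2 support_lo).
by rewrite (profile_hi al a1b1 b1a2 a2b2 support_hi) subrr.
Qed.

Lemma fisher_info1_le : fisher_info1 th <= (1 - al) * (4 * pi ^+ 2 / (rho * (1 - rho))).
Proof.
have c1_ge0 : 0 <= c1 by rewrite mulr_ge0 ?sqr_ge0 // mulr_ge0 // subr_ge0.
have c2_ge0 : 0 <= c2 by rewrite mulr_ge0 ?sqr_ge0 // mulr_ge0 // subr_ge0.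
have p_int := integrable_itv_continuous 0 1 (@continuous_sqr_score th).
rewrite -lee_fin /fisher_info1 /Rintegral fineK ?integrable_fin_num //.
pose q x := ((c1 * \1_(`[a1 + th, b1 + th]%classic) x)%:E +
             (c2 * \1_(`[a2 + th, b2 + th]%classic) x)%:E)%E.
have p_le_q : (\int[mu]_(x in `[0%R, 1%R]%classic) (h' (x - th) ^+ 2 / h (x - th))%:E <=
               \int[mu]_(x in `[0%R, 1%R]%classic) q x)%E.
  apply: ge0_le_integral => //.
  - by move=> x _; rewrite lee_fin divr_ge0 ?sqr_ge0 // ltW.
  - exact: measurable_int p_int.
  - by apply: emeasurable_funD; apply/measurable_EFinP/measurable_funM => //;
      exact: measurable_indic.
  - by move=> x _; rewrite /q -EFinD lee_fin; exact: sqr_score_le_indic.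
apply: le_trans p_le_q _; rewrite /q.
rewrite ge0_integralD //; first last.
- by apply/measurable_EFinP/measurable_funM => //; exact: measurable_indic.
- by move=> x _; rewrite lee_fin mulr_ge0 // indicE.
- by apply/measurable_EFinP/measurable_funM => //; exact: measurable_indic.
- by move=> x _; rewrite lee_fin mulr_ge0 // indicE.
have s1 : 0 <= a1 + th by rewrite -lerBlDr sub0r.
have s2 : b2 + th <= 1 by rewrite -lerBrDr.
have i1 : a1 + th < b1 + th by rewrite ltrD2r.
have i2 : a2 + th < b2 + th by rewrite ltrD2r.
have i12 : b1 + th <= a2 + th by rewrite lerD2r.
have s3 : 0 <= a2 + th by rewrite (le_trans s1) // (le_trans (ltW i1)).
have s4 : b1 + th <= 1 by rewrite (le_trans i12) // (le_trans (ltW i2)).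
rewrite !integral_indic_itv //.
rewrite -EFinD lee_fin /c1 /c2 le_eqVlt; apply/orP; left; apply/eqP.
have shift_len (a b : R) : b + th - (a + th) = b - a by ring.
by rewrite !shift_len b1_a1 b2_a2; field; rewrite !gt_eqF // subr_gt0.
Qed.

Lemma fisher_info_eq t : fisher_info rho al t th = (t%:R * fisher_info1 th)%:E.
Proof.
have f_int : mu.-integrable setT (EFin \o dens rho al th).
  by rewrite dens_patch; apply: integrable_patch_itv; exact: continuous_h_shift.
have sf_int :
    mu.-integrable setT (EFin \o (fun y => sample_score th y * dens rho al th y)).
  rewrite score_dens_patch; apply: integrable_patch_itv => x.
  exact: continuousN (@continuous_h'_shift th x).
have s2f_int :
    mu.-integrable setT (EFin \o (fun y => sample_score th y ^+ 2 * dens rho al th y)).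
  by rewrite sqr_score_dens_patch; apply: integrable_patch_itv; exact: continuous_sqr_score.
have s2f_mean :
    \int[mu]_y (sample_score th y ^+ 2 * dens rho al th y) = fisher_info1 th.
  by rewrite sqr_score_dens_patch -Rintegral_mkcond.
rewrite /fisher_info (iter_int_sqr_sum_prod f_int sf_int s2f_int integral_dens
  integral_score_dens s2f_mean (A := 0) (c := 1)) ?expr0n ?add0r ?mulr1 // => z _.
rewrite add0r mul1r.
(* Off [0, 1]^t the joint density vanishes, so the junk value of the score
   there does not matter. *)
have [z01 | /forallPn [i zi]] := boolP [forall i : 'I_t, 0 <= z i <= 1].
  by rewrite (score_sum th (fun i => forallP z01 i)).
have dens0 : dens rho al th (z i) = 0 by rewrite /dens (negbTE zi).
by rewrite /joint_dens (bigD1 i) //= dens0 mul0r !mulr0.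
Qed.
End support_in_unit_interval.
End cosine_density.

Theorem lemma4 (R : realType) (rho alpha : R)
  (hrho0 : 0 < rho) (hrho1 : rho < 1)
  (halpha0 : 0 < alpha) (halpha1 : alpha <= 1 / 2)
  (halpha2 : alpha <= 2 * rho) (halpha3 : alpha <= 2 * (1 - rho))
  (t : nat) (ht : (1 <= t)%N) (theta : R)
  (htheta : - (alpha / 20) <= theta <= alpha / 20) :
  (fisher_info rho alpha t theta
     <= (4 * pi ^+ 2 * t%:R / (rho * (1 - rho)))%:E)%E.
Proof.
case/andP: htheta => th_lo th_hi.
have al_le1 : alpha <= 1 by lra.
have den_gt0 : 0 < 16 - 8 * alpha by lra.
have support_lo : - theta <= l1 rho alpha 0.
  have : alpha / 20 <= (4 * rho - alpha) / (16 - 8 * alpha).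
    by rewrite ler_pdivlMr // mulrAC ler_pdivrMr //; nra.
  by rewrite /l1 addr0; lra.
have support_hi : r1 rho alpha 0 <= 1 - theta.
  have : (4 * rho - alpha) / (16 - 8 * alpha) <= 1 / 4 - alpha / 20.
    by rewrite ler_pdivrMr //; nra.
  by rewrite /r1 /r2 /l2 /l1 addr0; lra.
rewrite (fisher_info_eq hrho0 hrho1 halpha0 al_le1 support_lo support_hi) lee_fin.
have := fisher_info1_le hrho0 hrho1 halpha0 al_le1 support_lo support_hi.
set J := fisher_info1 _ _ _ => J_le.
have C_ge0 : 0 <= 4 * pi ^+ 2 / (rho * (1 - rho)).
  by rewrite divr_ge0 ?mulr_ge0 ?pi_ge0 //; lra.
have -> : 4 * pi ^+ 2 * t%:R / (rho * (1 - rho)) = t%:R * (4 * pi ^+ 2 / (rho * (1 - rho))).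
  by rewrite mulrAC mulrC mulrA.
rewrite ler_wpM2l // (le_trans J_le) // ler_piMl //; lra.
Qed.
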